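(* Let $\Sigma$ be a nonsingular fan in $\mathbb R^d$. Then the following are equivalent: (a) $\Sigma$ is pairwise convex; (b) for any two adjacent maximal cones $\sigma,\tau\in\Sigma_d$, the union $\sigma_{\le1}\cup\tau_{\le1}$ is convex. If moreover $\Sigma$ is finite and complete, these are also equivalent to: (c) $\Sigma$ is pairwise positive and $\mathcal P(\Sigma)$ is convex.
   Context: A fan is nonsingular if every maximal cone is generated by a $\mathbb Z$-basis of $\mathbb Z^d$; $\Sigma_d$ is the set of $d$-dimensional cones. Two maximal cones are adjacent if they share a face of dimension $d-1$; then one can write $\sigma=\operatorname{cone}\{v_1,\ldots,v_{d-1},v_d\}$, $\tau=\operatorname{cone}\{v_1,\ldots,v_{d-1},v'_d\}$ with both generating sets $\mathbb Z$-bases. $\Sigma$ is pairwise positive if always $v_d+v'_d\in\operatorname{cone}\{v_1,\ldots,v_{d-1}\}$, and pairwise convex if always $v_d+v'_d$ equals $0$, or $v_i$ for some $1\le i\le d-1$, or $v_i+v_j$ for some $1\le i,j\le d-1$. For $\sigma\in\Sigma_d$ generated by a basis $v_1,\dots,v_d$, $\sigma_{\le1}=\operatorname{conv}\{0,v_1,\ldots,v_d\}$, and $\mathcal P(\Sigma)=\bigcup_{\sigma\in\Sigma_d}\sigma_{\le1}$. $\Sigma$ is complete if the union of its cones is $\mathbb R^d$. *)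

From HB Require Import structures.
From mathcomp Require Import all_boot all_order all_algebra.
From mathcomp Require Import classical_sets reals.
Set Implicit Arguments. Unset Strict Implicit. Unset Printing Implicit Defensive.
Import Order.TTheory GRing.Theory Num.Theory.
Local Open Scope ring_scope.
Local Open Scope classical_set_scope.

Section Fans.
Variables (R : realType) (d : nat).
Local Notation vec := 'rV[R]_d.

Definition dotv (u x : vec) : R := \sum_(i < d) u 0 i * x 0 i.

Definition lattice_pt (v : vec) : Prop := forall i, v 0 i \is a Num.int.

Definition Zbasis (I : finType) (b : I -> vec) : Prop :=
  (forall i, lattice_pt (b i)) /\
  (forall w, lattice_pt w -> exists c : I -> int, w = \sum_i (c i)%:~R *: b i) /\
  (forall c c' : I -> int, \sum_i (c i)%:~R *: b i = \sum_i (c' i)%:~R *: b i ->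
     forall i, c i = c' i).

Definition cone (I : finType) (b : I -> vec) : set vec :=
  [set x | exists lam : I -> R, (forall i, 0 <= lam i) /\ x = \sum_i lam i *: b i].

Definition conv (I : finType) (b : I -> vec) : set vec :=
  [set x | exists lam : I -> R, [/\ forall i, 0 <= lam i, \sum_i lam i = 1 &
                                   x = \sum_i lam i *: b i]].

Definition convex (A : set vec) : Prop :=
  forall x y t, A x -> A y -> 0 <= t -> t <= 1 -> A ((1 - t) *: x + t *: y).

Definition ext (k : nat) (b : 'I_k -> vec) (v : vec) : option 'I_k -> vec :=
  fun o => match o with Some i => b i | None => v end.

(* sigma_{<=1} = conv{0, v_1, ..., v_d} for sigma = cone{v_1,...,v_d} *)
Definition cone_le1 (I : finType) (b : I -> vec) : set vec :=
  conv (fun o : option I => match o with Some i => b i | None => 0 end).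

Definition rat_spc (C : set vec) : Prop :=
  (exists (k : nat) (g : 'I_k -> vec), (forall i, lattice_pt (g i)) /\ C = cone g) /\
  (forall x, C x -> C (- x) -> x = 0).

Definition face (F C : set vec) : Prop :=
  exists u : vec, (forall x, C x -> 0 <= dotv u x) /\
                  F = C `&` [set x | dotv u x = 0].

Definition fan (S : set (set vec)) : Prop :=
  [/\ forall C, S C -> rat_spc C,
      forall C F, S C -> face F C -> S F &
      forall C C', S C -> S C' -> face (C `&` C') C /\ face (C `&` C') C'].

Definition lin_indep (k : nat) (b : 'I_k -> vec) : Prop :=
  forall c : 'I_k -> R, \sum_i c i *: b i = 0 -> forall i, c i = 0.

(* dimension of a cone = dimension of its linear span
   = maximal number of linearly independent vectors in it *)
Definition dim_ge (C : set vec) (k : nat) : Prop :=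
  exists b : 'I_k -> vec, (forall i, C (b i)) /\ lin_indep b.
Definition cone_dim (C : set vec) (k : nat) : Prop :=
  dim_ge C k /\ ~ dim_ge C k.+1.

Definition maximal_cone (S : set (set vec)) (C : set vec) : Prop :=
  S C /\ forall C', S C' -> C `<=` C' -> C' = C.

Definition nonsingular_fan (S : set (set vec)) : Prop :=
  fan S /\ forall C, maximal_cone S C ->
    exists b : 'I_d -> vec, Zbasis b /\ C = cone b.

Definition top_cones (S : set (set vec)) : set (set vec) :=
  [set C | S C /\ cone_dim C d].

Definition adjacent (S : set (set vec)) (s t : set vec) : Prop :=
  [/\ top_cones S s, top_cones S t, s <> t &
      exists F, [/\ face F s, face F t & cone_dim F d.-1]].

Definition adj_repr (s t : set vec) (k : nat) (u : 'I_k -> vec) (v v' : vec) : Prop :=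
  [/\ Zbasis (ext u v), Zbasis (ext u v'), s = cone (ext u v) & t = cone (ext u v')].

Definition pairwise_positive (S : set (set vec)) : Prop :=
  forall s t, adjacent S s t ->
  forall k (u : 'I_k -> vec) v v', adj_repr s t u v v' -> cone u (v + v').

Definition pairwise_convex (S : set (set vec)) : Prop :=
  forall s t, adjacent S s t ->
  forall k (u : 'I_k -> vec) v v', adj_repr s t u v v' ->
    [\/ v + v' = 0, exists i, v + v' = u i | exists i j, v + v' = u i + u j].

Definition PSigma (S : set (set vec)) : set vec :=
  [set x | exists s, top_cones S s /\
     exists b : 'I_d -> vec, [/\ Zbasis b, s = cone b & cone_le1 b x]].

Definition complete_fan (S : set (set vec)) : Prop :=
  forall x : vec, exists C, S C /\ C x.

End Fans.

(* (a) <-> (b): write two adjacent cones as cone{u, v} and cone{u, v'}; since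
   both are Z-bases, v + v' = sum_i n_i u_i with integers n_i.  The union of the
   two simplices is convex iff it contains the midpoint of v and v', iff the n_i
   are nonnegative with sum at most 2, which is pairwise convexity.
   (c): P(Sigma) is the sublevel set {h <= 1} of the height function h, equal on
   each maximal cone to the linear form that is 1 on its generators; heights of
   cones agree on their common faces.  Pairwise convexity is convexity of h
   across each wall, and sweeping along a generic segment, which crosses the
   walls one facet at a time, shows that the height of any maximal cone is
   below h everywhere, i.e. that h is convex.  Conversely, if v + v' lies in
   the cone of u and P(Sigma) is convex, the midpoint of v and v' lies in
   P(Sigma) and in the cone of v, hence in the simplex of v. *)

From mathcomp Require Import all_boot all_order all_algebra.
From mathcomp Require Import classical_sets cardinality reals boolp.
From mathcomp Require Import ring lra zify.
From Stdlib Require Import ClassicalEpsilon.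
Set Implicit Arguments. Unset Strict Implicit. Unset Printing Implicit Defensive.
Import Order.TTheory GRing.Theory Num.Theory.
Local Open Scope ring_scope.
Local Open Scope classical_set_scope.

Lemma sum_option (V : nmodType) (I : finType) (F : option I -> V) :
  \sum_(o : option I) F o = F None + \sum_(i : I) F (Some i).
Proof.
rewrite (bigD1 None) //=; congr (_ + _).
rewrite (reindex_omap Some id) //=; last by case.
by apply: eq_bigl => i; rewrite eqxx.
Qed.

Lemma sum_scale_delta (K : pzRingType) (V : lmodType K) (I : finType) (b : I -> V) i :
  \sum_k (i == k)%:R *: b k = b i.
Proof.
rewrite (bigD1 i) //= eqxx scale1r big1 ?addr0 // => k /negbTE.
by rewrite eq_sym => ->; rewrite scale0r.
Qed.

Lemma int_ge1 (R : archiNumDomainType) (x : R) : x \is a Num.int -> 0 < x -> 1 <= x.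
Proof. by move=> /intrP [m ->]; rewrite ltr0z ler1z. Qed.

Lemma intr_mul_eq1 (R : archiNumDomainType) (x y : R) :
  x \is a Num.int -> y \is a Num.int -> x * y = 1 -> y = 1 \/ y = -1.
Proof.
move=> /intrP [m ->] /intrP [n ->]; rewrite -intrM -[1]/((1 : int)%:~R).
move=> /eqP; rewrite eqr_int => /eqP /intUnitRing.unitzPl /orP [] /eqP ->.
  by left.
by right; rewrite rmorphN1.
Qed.

Lemma rV_dim0_eq (T : Type) (d : nat) (x y : 'rV[T]_d) : d = 0%N -> x = y.
Proof. by move=> d0; apply/rowP => j; have := ltn_ord j; rewrite {2}d0. Qed.

Section Coordinates.
Variables (R : realType) (d : nat).
Local Notation vec := 'rV[R]_d.
Implicit Types (I : finType) (x y : vec).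

Lemma Zbasis_lattice I (b : I -> vec) i : Zbasis b -> lattice_pt (b i).
Proof. by case=> + _; apply. Qed.

Lemma Zbasis_delta I (b : I -> vec) : Zbasis b ->
  exists c : 'I_d -> I -> int, forall j, 'e_j = \sum_i (c j i)%:~R *: b i.
Proof.
move=> [_ [Hspan _]].
apply: (choice (fun j c => 'e_j = \sum_i (c i)%:~R *: b i)) => j.
by apply: Hspan => k; rewrite mxE natr_int.
Qed.

Lemma Zbasis_span I (b : I -> vec) x : Zbasis b ->
  exists lam : I -> R, x = \sum_i lam i *: b i.
Proof.
move=> /Zbasis_delta [c Hc]; exists (fun i => \sum_j x 0 j * (c j i)%:~R).
rewrite {1}(row_sum_delta x); under eq_bigr => j _ do rewrite Hc scaler_sumr.
rewrite exchange_big /=; apply: eq_bigr => i _.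
by rewrite scaler_suml; apply: eq_bigr => j _; rewrite scalerA.
Qed.

(* Write [b_i = sum_j n_ij e_j] and [e_j = sum_i c_ji b_i]; uniqueness of
   integer coordinates makes [n c] the identity, which transfers real
   relations among the [b_i] to relations among the [e_j]. *)
Lemma Zbasis_free I (b : I -> vec) (lam : I -> R) : Zbasis b ->
  \sum_i lam i *: b i = 0 -> forall i, lam i = 0.
Proof.
move=> Hb Hlam k; have [Hl [_ Huniq]] := Hb; have [c Hc] := Zbasis_delta Hb.
have [n Hn] : exists n : I -> 'I_d -> int, forall i j, b i 0 j = (n i j)%:~R.
  apply: (choice (fun i n => forall j, b i 0 j = (n j)%:~R)) => i.
  by apply: (choice (fun j m => b i 0 j = m%:~R)) => j; apply/intrP/Hl.
have nc1 : forall i i', \sum_j n i j * c j i' = (i == i')%:R.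
  move=> i; apply: Huniq; rewrite [RHS](_ : _ = b i); last first.
    by rewrite -[RHS](sum_scale_delta b i); apply: eq_bigr => i' _; case: (i == i').
  under eq_bigr => i' _ do rewrite rmorph_sum /= scaler_suml.
  rewrite exchange_big /= [RHS](row_sum_delta (b i)); apply: eq_bigr => j _.
  rewrite Hn Hc scaler_sumr; apply: eq_bigr => i' _.
  by rewrite rmorphM /= scalerA.
have -> : lam k = \sum_i lam i * ((i == k)%:R : int)%:~R.
  rewrite (bigD1 k) //= eqxx mulr1 big1 ?addr0 // => i /negbTE ->.
  by rewrite mulr0.
under eq_bigr => i _ do rewrite -nc1 rmorph_sum /= mulr_sumr.
rewrite exchange_big /= big1 // => j _.
have : (\sum_i lam i *: b i) 0 j = 0 by rewrite Hlam mxE.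
rewrite summxE => Hj.
rewrite -[RHS](mul0r (c j k)%:~R) -[in RHS]Hj mulr_suml; apply: eq_bigr => i _.
by rewrite rmorphM /= mxE Hn mulrA.
Qed.

(* Only meaningful when [b] is a basis, which every lemma below assumes. *)
Definition coord I (b : I -> vec) x : I -> R :=
  epsilon (inhabits (fun _ => 0)) (fun lam => x = \sum_i lam i *: b i).

Section Basis.
Variables (I : finType) (b : I -> vec).
Hypothesis Hb : Zbasis b.

Lemma coordE x : x = \sum_i coord b x i *: b i.
Proof. exact: epsilon_spec (Zbasis_span x Hb). Qed.

Lemma coord_unique x (lam : I -> R) : x = \sum_i lam i *: b i -> coord b x =1 lam.
Proof.
move=> Hx i; apply/eqP; rewrite -subr_eq0; apply/eqP.
apply: (Zbasis_free (lam := fun i => coord b x i - lam i)) Hb _ i.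
under eq_bigr => k _ do rewrite scalerBl.
by rewrite sumrB -coordE -Hx subrr.
Qed.

Lemma coord_sum (J : finType) (mu : J -> R) (y : J -> vec) i :
  coord b (\sum_k mu k *: y k) i = \sum_k mu k * coord b (y k) i.
Proof.
apply: (coord_unique (lam := fun i => \sum_k mu k * coord b (y k) i)).
under [RHS]eq_bigr => i0 _ do rewrite scaler_suml.
rewrite exchange_big /=; apply: eq_bigr => k _.
by rewrite {1}(coordE (y k)) scaler_sumr; apply: eq_bigr => i0 _; rewrite scalerA.
Qed.

Lemma coordD x y i : coord b (x + y) i = coord b x i + coord b y i.
Proof.
apply: (coord_unique (lam := fun i => coord b x i + coord b y i)).
by under eq_bigr => k _ do rewrite scalerDl; rewrite big_split /= -!coordE.
Qed.

Lemma coordZ a x i : coord b (a *: x) i = a * coord b x i.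
Proof.
apply: (coord_unique (lam := fun i => a * coord b x i)).
by under eq_bigr => k _ do rewrite -scalerA; rewrite -scaler_sumr -coordE.
Qed.

Lemma coordB x y i : coord b (x - y) i = coord b x i - coord b y i.
Proof. by rewrite coordD -scaleN1r coordZ mulN1r. Qed.

Lemma coord_basis j i : coord b (b j) i = (i == j)%:R.
Proof.
apply: (coord_unique (lam := fun i => (i == j)%:R)).
by under eq_bigr => k _ do rewrite eq_sym; rewrite sum_scale_delta.
Qed.

Lemma coord_int x : lattice_pt x -> forall i, coord b x i \is a Num.int.
Proof.
have [_ [Hspan _]] := Hb; move=> /Hspan [c Hc] i.
by rewrite (coord_unique Hc) intr_int.
Qed.

Lemma coneP x : cone b x <-> forall i, 0 <= coord b x i.
Proof.
split; first by case=> lam [Hl Hx] i; rewrite (coord_unique Hx).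
by move=> H; exists (coord b x); split => //; apply: coordE.
Qed.

Lemma cone_le1P x :
  cone_le1 b x <-> (forall i, 0 <= coord b x i) /\ \sum_i coord b x i <= 1.
Proof.
split.
  case=> lam [Hl Hs Hx]; rewrite sum_option scaler0 add0r in Hx.
  have Hc := coord_unique Hx; split; first by move=> i; rewrite Hc.
  rewrite sum_option in Hs; under eq_bigr => i _ do rewrite Hc.
  by rewrite -Hs lerDr.
move=> [H1 H2].
exists (fun o => if o is Some i then coord b x i else 1 - \sum_i coord b x i).
split.
- by case=> [i|] //; rewrite subr_ge0.
- by rewrite sum_option subrK.
- by rewrite sum_option scaler0 add0r -coordE.
Qed.

Lemma cone_le1_basis i : cone_le1 b (b i).
Proof.
apply/cone_le1P; split; first by move=> j; rewrite coord_basis ler0n.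
rewrite (bigD1 i) //= coord_basis eqxx big1 ?addr0 // => j /negbTE Hj.
by rewrite coord_basis Hj.
Qed.

Lemma cone_le1_convex : convex (cone_le1 b).
Proof.
move=> x y t /cone_le1P [Hx1 Hx2] /cone_le1P [Hy1 Hy2] t0 t1.
apply/cone_le1P; split.
  move=> i; rewrite coordD !coordZ.
  by apply: addr_ge0; apply: mulr_ge0 => //; rewrite subr_ge0.
under eq_bigr => i _ do rewrite coordD !coordZ.
rewrite big_split /= -!mulr_sumr.
set A := \sum_i _ in Hx2 *; set B := \sum_i _ in Hy2 *.
nra.
Qed.

Lemma Zbasis_inj : injective b.
Proof.
move=> i j Hij; have := coord_basis i j; rewrite Hij coord_basis eqxx.
by move/esym/eqP; rewrite pnatr_eq1 eqb1 => /eqP.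
Qed.

End Basis.

Lemma cone_basis I (b : I -> vec) i : cone b (b i).
Proof.
exists (fun k => (k == i)%:R); split; first by move=> k; rewrite ler0n.
by under eq_bigr => k _ do rewrite eq_sym; rewrite sum_scale_delta.
Qed.

End Coordinates.

Section Dimension.
Variables (R : realType) (d : nat).
Local Notation vec := 'rV[R]_d.

Lemma lin_indep_le (m n : nat) (y : 'I_m -> vec) (a : 'I_n -> vec) :
  lin_indep y -> (forall l, exists mu : 'I_n -> R, y l = \sum_i mu i *: a i) ->
  (m <= n)%N.
Proof.
move=> Hy Hspan.
have [M HM] := choice (fun l mu => y l = \sum_i mu i *: a i) Hspan.
pose Y := \matrix_(l < m) y l.
have YE : Y = \matrix_(l < m, i < n) M l i *m \matrix_(i < n) a i.
  apply/row_matrixP => l; rewrite rowK row_mul mulmx_sum_row HM.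
  by apply: eq_bigr => i _; rewrite !mxE rowK.
have /eqP <- : row_free Y.
  apply/inj_row_free => c Hc; apply/rowP => l; rewrite mxE.
  apply: Hy l; rewrite -[RHS]Hc mulmx_sum_row.
  by apply: eq_bigr => l' _; rewrite rowK.
by rewrite YE (leq_trans (mxrankM_maxr _ _)) ?rank_leq_row.
Qed.

Lemma lin_indep_le_dim (m : nat) (y : 'I_m -> vec) : lin_indep y -> (m <= d)%N.
Proof.
move=> /lin_indep_le; apply => l.
by exists (fun j => y l 0 j); apply: row_sum_delta.
Qed.

Lemma cone_dim_basis (b : 'I_d -> vec) : Zbasis b -> cone_dim (cone b) d.
Proof.
move=> Hb; split; last by case=> y [_ /lin_indep_le_dim]; rewrite ltnn.
by exists b; split; [exact: cone_basis | move=> c; apply: Zbasis_free].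
Qed.

Section Reindex.
Variables (I J : finType) (b : I -> vec) (h : J -> I).
Hypotheses (hb : bijective h) (Hb : Zbasis b).

Lemma Zbasis_reindex : Zbasis (b \o h).
Proof.
have [Hl [Hs Hu]] := Hb; have [g hg gh] := hb.
split; first by move=> j; apply: Hl.
split.
  move=> w /Hs [c ->]; exists (c \o h).
  by rewrite (reindex h) //; apply: onW_bij.
move=> c c' H j.
suff /(_ (h j)) : forall i, c (g i) = c' (g i) by rewrite hg.
apply: Hu; rewrite (reindex h); last exact: onW_bij.
rewrite [RHS](reindex h); last exact: onW_bij.
by under eq_bigr => k _ do rewrite hg; under [RHS]eq_bigr => k _ do rewrite hg.
Qed.

Lemma coord_reindex x j : coord (b \o h) x j = coord b x (h j).
Proof.
apply: (coord_unique Zbasis_reindex (lam := fun j => coord b x (h j))).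
by rewrite {1}(coordE Hb x) (reindex h) //; exact: onW_bij.
Qed.

Lemma cone_reindex : cone (b \o h) = cone b.
Proof.
have [g hg gh] := hb.
rewrite predeqE => x; rewrite (coneP Zbasis_reindex) (coneP Hb); split.
  by move=> H i; rewrite -(gh i) -coord_reindex.
by move=> H j; rewrite coord_reindex.
Qed.

Lemma cone_le1_reindex : cone_le1 (b \o h) = cone_le1 b.
Proof.
have [g hg gh] := hb.
rewrite predeqE => x; rewrite (cone_le1P Zbasis_reindex) (cone_le1P Hb).
under eq_bigr => j _ do rewrite coord_reindex.
rewrite -(reindex h (P := xpredT) (F := coord b x)); last exact: onW_bij.
split; move=> [H1 H2]; split => //.
  by move=> i; rewrite -(gh i) -coord_reindex.
by move=> j; rewrite coord_reindex.
Qed.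

End Reindex.

Lemma Zbasis_ord (I : finType) (b : I -> vec) : Zbasis b ->
  exists h : 'I_d -> I, bijective h.
Proof.
move=> Hb; suff Ecard : #|I| = d.
  exists (enum_val \o cast_ord (esym Ecard)); apply: bij_comp.
    exact: enum_val_bij.
  by exists (cast_ord Ecard); [exact: cast_ordKV | exact: cast_ordK].
have Hy : Zbasis (b \o enum_val) := Zbasis_reindex (enum_val_bij _) Hb.
apply/eqP; rewrite eqn_leq; apply/andP; split.
  by apply: (lin_indep_le_dim (y := b \o enum_val)) => c; apply: Zbasis_free.
apply: (lin_indep_le (y := fun j : 'I_d => 'e_j) (a := b \o enum_val)).
  move=> c Hc j; have := congr1 (fun x : vec => x 0 j) Hc.
  rewrite summxE (bigD1 j) //= !mxE !eqxx mulr1 big1 ?addr0 // => k Hk.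
  by rewrite !mxE eq_sym (negbTE Hk) andbF mulr0.
by move=> j; apply: Zbasis_span.
Qed.

End Dimension.

Section Faces.
Variables (R : realType) (d : nat).
Local Notation vec := 'rV[R]_d.

Lemma Zbasis_ray (I J : finType) (b' : J -> vec) (a : I -> vec) (lam : I -> R) j :
  Zbasis b' -> (forall i, 0 <= lam i) -> b' j = \sum_i lam i *: a i ->
  (forall i, 0 < lam i -> cone b' (a i)) ->
  exists i, 0 < lam i /\ exists2 c, 0 < c & a i = c *: b' j.
Proof.
move=> Hb' Hl Hj Hc.
have Hco k : coord b' (b' j) k = \sum_i lam i * coord b' (a i) k.
  by rewrite {1}Hj coord_sum.
have Hnn i k : 0 <= lam i * coord b' (a i) k.
  have := Hl i; rewrite le0r => /orP [/eqP -> | Hp]; first by rewrite mul0r.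
  by apply: mulr_ge0; [exact: ltW | exact: (proj1 (coneP Hb' _) (Hc i Hp))].
have Hz k i : k != j -> lam i * coord b' (a i) k = 0.
  move=> Hk; apply: (psumr_eq0P (P := xpredT) (F := fun i => lam i * coord b' (a i) k)) => //.
  by rewrite -Hco coord_basis // (negbTE Hk).
have [i Hi] : exists i, lam i * coord b' (a i) j != 0.
  apply/existsP; rewrite -negb_forall; apply/negP => /forallP H.
  have : coord b' (b' j) j = 0 by rewrite Hco big1 // => i _; apply/eqP/H.
  by rewrite coord_basis // eqxx => /eqP; rewrite oner_eq0.
have Hli : 0 < lam i.
  by rewrite lt_def (Hl i) andbT; apply: contraNneq Hi => ->; rewrite mul0r.
exists i; split => //; exists (coord b' (a i) j).
  rewrite lt_def (proj1 (coneP Hb' _) (Hc i Hli) j) andbT.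
  by apply: contraNneq Hi => ->; rewrite mulr0.
rewrite {1}(coordE Hb' (a i)) (bigD1 j) //= big1 ?addr0 // => k Hk.
by move/eqP: (Hz k i Hk); rewrite mulf_eq0 (gt_eqF Hli) => /eqP ->; rewrite scale0r.
Qed.

(* [c] and [c^-1] are both integer coordinates. *)
Lemma Zbasis_primitive (I J : finType) (b : I -> vec) (b' : J -> vec) i j c :
  Zbasis b -> Zbasis b' -> 0 < c -> b' j = c *: b i -> c = 1.
Proof.
move=> Hb Hb' Hc Hbc.
have H1 : coord b (b' j) i = c by rewrite Hbc coordZ // coord_basis // eqxx mulr1.
have H2 : coord b' (b i) j = c^-1.
  have -> : b i = c^-1 *: b' j by rewrite Hbc scalerA mulVf ?scale1r // gt_eqF.
  by rewrite coordZ // coord_basis // eqxx mulr1.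
have Hc1 : 1 <= c.
  rewrite -H1; apply: int_ge1; last by rewrite H1.
  by apply: coord_int; last exact: Zbasis_lattice.
have Hc2 : 1 <= c^-1.
  rewrite -H2; apply: int_ge1; last by rewrite H2 invr_gt0.
  by apply: coord_int; last exact: Zbasis_lattice.
apply/eqP; rewrite eq_le Hc1 andbT.
by have := ler_wpM2l (ltW Hc) Hc2; rewrite mulr1 mulfV ?gt_eqF.
Qed.

Lemma Zbasis_extreme (I J : finType) (b : I -> vec) (b' : J -> vec) (lam : I -> R) j :
  Zbasis b -> Zbasis b' -> (forall i, 0 <= lam i) -> b' j = \sum_i lam i *: b i ->
  (forall i, 0 < lam i -> cone b' (b i)) -> exists i, 0 < lam i /\ b i = b' j.
Proof.
move=> Hb Hb' Hl Hj Hc.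
have [i [Hi [c Hc0 Hbi]]] := Zbasis_ray Hb' Hl Hj Hc.
by exists i; split => //; rewrite Hbi (Zbasis_primitive Hb' Hb Hc0 Hbi) scale1r.
Qed.

Lemma dotvC (u x : vec) : dotv u x = dotv x u.
Proof. by apply: eq_bigr => k _; rewrite mulrC. Qed.

Lemma dotv_sum (I : finType) (w : vec) (lam : I -> R) (b : I -> vec) :
  dotv w (\sum_i lam i *: b i) = \sum_i lam i * dotv w (b i).
Proof.
rewrite /dotv; under eq_bigr => k _ do rewrite summxE mulr_sumr.
rewrite exchange_big /=; apply: eq_bigr => i _.
by rewrite mulr_sumr; apply: eq_bigr => k _; rewrite mxE mulrCA.
Qed.

Lemma dotvD (w x y : vec) : dotv w (x + y) = dotv w x + dotv w y.
Proof. by rewrite /dotv -big_split /=; apply: eq_bigr => k _; rewrite mxE mulrDr. Qed.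

Lemma dotvZ (w x : vec) a : dotv w (a *: x) = a * dotv w x.
Proof. by rewrite /dotv mulr_sumr; apply: eq_bigr => k _; rewrite mxE mulrCA. Qed.

Lemma dotv0 (w : vec) : dotv w 0 = 0.
Proof. by rewrite /dotv big1 // => k _; rewrite mxE mulr0. Qed.

Lemma coord_dual (I : finType) (b : I -> vec) j : Zbasis b ->
  exists w : vec, forall x, dotv w x = coord b x j.
Proof.
move=> Hb; exists (\row_k coord b 'e_k j) => x.
rewrite {2}(row_sum_delta x) coord_sum // /dotv; apply: eq_bigr => k _.
by rewrite mxE mulrC.
Qed.

Lemma face_coneP (I : finType) (b : I -> vec) F : Zbasis b -> face F (cone b) ->
  exists w : vec, (forall i, 0 <= dotv w (b i)) /\
   F = [set x | cone b x /\ forall i, 0 < dotv w (b i) -> coord b x i = 0].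
Proof.
move=> Hb [w [Hw ->]]; exists w.
have Hwb i : 0 <= dotv w (b i) by apply/Hw/cone_basis.
split => //; rewrite predeqE => x /=; split.
  move=> [Hx Hx0]; split => // i Hi.
  have Hc := (coneP Hb x).1 Hx.
  have : \sum_i coord b x i * dotv w (b i) = 0 by rewrite -dotv_sum -coordE.
  move/(psumr_eq0P (P := xpredT)) => H.
  have /eqP := H (fun i _ => mulr_ge0 (Hc i) (Hwb i)) i isT.
  by rewrite mulf_eq0 (gt_eqF Hi) orbF => /eqP.
move=> [Hx H]; split => //.
rewrite (coordE Hb x) dotv_sum big1 // => i _.
by have := Hwb i; rewrite le0r => /orP [/eqP -> | /H ->]; rewrite ?mulr0 ?mul0r.
Qed.

Definition facet (I : finType) (b : I -> vec) (j : I) : set vec :=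
  [set x | cone b x /\ coord b x j = 0].

Lemma facet_face (I : finType) (b : I -> vec) j : Zbasis b -> face (facet b j) (cone b).
Proof.
move=> Hb; have [w Hw] := coord_dual j Hb; exists w; split.
  by move=> x /(coneP Hb) H; rewrite Hw.
by rewrite predeqE => x /=; rewrite Hw.
Qed.

Lemma span_delete n (a : 'I_n -> vec) (mu : 'I_n -> R) j :
  mu j = 0 -> \sum_i mu i *: a i = \sum_(k < n.-1) mu (lift j k) *: a (lift j k).
Proof. by move=> Hj; rewrite (bigD1_ord j) //= Hj scale0r add0r. Qed.

Lemma facet_dim (b : 'I_d -> vec) j : Zbasis b -> cone_dim (facet b j) d.-1.
Proof.
move=> Hb; split.
  exists (fun k => b (lift j k)); split.
    move=> k; split; first exact: cone_basis.
    by rewrite coord_basis // (negbTE (neq_lift _ _)).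
  move=> c Hc k.
  have := coord_sum Hb c (fun k => b (lift j k)) (lift j k).
  rewrite Hc -[0 : vec](scale0r 0) coordZ // mul0r (bigD1 k) //= coord_basis //.
  rewrite eqxx mulr1 big1 ?addr0 => [->//|i Hi].
  by rewrite coord_basis // (inj_eq lift_inj) eq_sym (negbTE Hi) mulr0.
move=> [y [Hy Hyi]]; suff : (d.-1.+1 <= d.-1)%N by rewrite ltnn.
apply: (lin_indep_le Hyi (a := fun k => b (lift j k))) => l.
exists (fun k => coord b (y l) (lift j k)).
by rewrite -span_delete; [exact: coordE | exact: (Hy l).2].
Qed.

Lemma face_dim_facet (b : 'I_d -> vec) F : (0 < d)%N -> Zbasis b ->
  face F (cone b) -> cone_dim F d.-1 -> exists j, F = facet b j.
Proof.
move=> d0 Hb HF [[y [HyF Hy]] Hnd].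
have [w [Hwb HFe]] := face_coneP Hb HF; subst F.
have [j Hj] : exists j, 0 < dotv w (b j).
  apply: contrapT => Hno; apply: Hnd; rewrite prednK //.
  exists b; split => [i|c]; last exact: Zbasis_free.
  by split => [|k Hk]; [exact: cone_basis | case: Hno; exists k].
have Hun i : 0 < dotv w (b i) -> i = j.
  move=> Hi; case: (unliftP j i) => [i' Ei | //]; exfalso.
  have d1 : (0 < d.-1)%N by apply: leq_ltn_trans (ltn_ord i').
  suff : (d.-1 <= d.-1.-1)%N by rewrite leqNgt ltn_predL d1.
  apply: (lin_indep_le Hy (a := fun k => b (lift j (lift i' k)))) => l.
  exists (fun k => coord b (y l) (lift j (lift i' k))).
  have [_ Hyl0] := HyF l.
  have Hi0 : coord b (y l) (lift j i') = 0 by rewrite -Ei; apply: Hyl0.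
  rewrite {1}(coordE Hb (y l)) (span_delete _ (Hyl0 _ Hj)).
  by rewrite (span_delete (fun k => b (lift j k)) (mu := fun k => _ (lift j k)) Hi0).
exists j; rewrite predeqE => x /=; split; first by move=> [Hx H]; split => //; apply: H.
by move=> [Hx H]; split => // i /Hun ->.
Qed.

End Faces.

Section Adjacent.
Variables (R : realType) (d : nat).
Local Notation vec := 'rV[R]_d.

Lemma face_support (I : finType) (b : I -> vec) F x j : Zbasis b ->
  face F (cone b) -> F x -> 0 < coord b x j -> F (b j).
Proof.
move=> Hb /(face_coneP Hb) [w [Hw EF]]; rewrite EF => -[Hx Hx0] Hj.
split; first exact: cone_basis.
move=> k Hk; rewrite coord_basis //; case: eqP => // Ekj; subst k.
by move: Hj; rewrite Hx0 ?ltxx.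
Qed.

Lemma face_basis_match (I J : finType) (b : I -> vec) (b' : J -> vec) F i :
  Zbasis b -> Zbasis b' -> face F (cone b') -> F `<=` cone b -> F (b i) ->
  exists j, b' j = b i /\ F (b' j).
Proof.
move=> Hb Hb' HF FC Fbi.
have Hbi : cone b' (b i) by case: HF => w [_ EF]; move: Fbi; rewrite EF => -[].
have Hsupp j : 0 < coord b' (b i) j -> F (b' j) by apply: face_support.
have [j [Hj Ej]] := Zbasis_extreme Hb' Hb ((coneP Hb' _).1 Hbi)
  (coordE Hb' (b i)) (fun j Hj => FC _ (Hsupp j Hj)).
by exists j; split => //; apply: Hsupp.
Qed.

Definition lift_option (j : 'I_d) (o : option 'I_d.-1) : 'I_d :=
  if o is Some i then lift j i else j.

Lemma lift_option_bij j : bijective (lift_option j).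
Proof.
exists (unlift j); first by case=> [i|] /=; rewrite ?liftK ?unlift_none.
by move=> i; case: unliftP.
Qed.

Lemma ext_lift (b : 'I_d -> vec) j : ext (b \o lift j) (b j) = b \o lift_option j.
Proof. by apply: funext; case. Qed.

Lemma Zbasis_ext_lift (b : 'I_d -> vec) j : Zbasis b ->
  [/\ Zbasis (ext (b \o lift j) (b j)),
      cone b = cone (ext (b \o lift j) (b j)) &
      cone_le1 b = cone_le1 (ext (b \o lift j) (b j))].
Proof.
rewrite ext_lift => Hb; split.
- exact: Zbasis_reindex (lift_option_bij j) Hb.
- by rewrite cone_reindex //; exact: lift_option_bij.
- by rewrite cone_le1_reindex //; exact: lift_option_bij.
Qed.

Lemma facet_neighbour (b b' : 'I_d -> vec) j : (0 < d)%N -> Zbasis b -> Zbasis b' ->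
  face (facet b j) (cone b') ->
  exists q, [/\ Zbasis (ext (b \o lift j) (b' q)),
      cone b' = cone (ext (b \o lift j) (b' q)) &
      cone_le1 b' = cone_le1 (ext (b \o lift j) (b' q))].
Proof.
move=> d0 Hb Hb' HF.
have [q Fq] : exists q, ~ facet b j (b' q).
  apply: contrapT => Hall; case: (facet_dim j Hb) => _; apply.
  rewrite prednK //; exists b'; split => [k|c]; last exact: Zbasis_free.
  by apply: contrapT => Hk; apply: Hall; exists k.
have Hg i : exists k, k != q /\ b' k = b (lift j i).
  have Fi : facet b j (b (lift j i)).
    by split; [exact: cone_basis | rewrite coord_basis // (negbTE (neq_lift _ _))].
  have [k [Ek Fk]] := face_basis_match Hb Hb' HF (fun x => @proj1 _ _) Fi.
  by exists k; split => //; apply: contraPneq Fq => <-.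
have [g Hgq] := choice (fun i k => k != q /\ b' k = b (lift j i)) Hg.
pose h (o : option 'I_d.-1) : 'I_d := if o is Some i then g i else q.
have hinj : injective h.
  have ginj : injective g.
    move=> i1 i2 E; apply: (@lift_inj _ j); apply: (Zbasis_inj Hb).
    by rewrite -(Hgq i1).2 -(Hgq i2).2 E.
  case=> [i1|] [i2|] //= E; first by rewrite (ginj _ _ E).
    by move: (Hgq i1).1; rewrite E eqxx.
  by move: (Hgq i2).1; rewrite E eqxx.
have hb : bijective h.
  by apply: inj_card_bij => //; rewrite card_option !card_ord prednK.
exists q; have -> : ext (b \o lift j) (b' q) = b' \o h.
  by apply: funext; case => //= i; rewrite (Hgq i).2.
split; [exact: Zbasis_reindex | by rewrite cone_reindex | by rewrite cone_le1_reindex].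
Qed.

Lemma adjacent_repr (S : set (set vec)) s t (b b' : 'I_d -> vec) :
  adjacent S s t -> Zbasis b -> Zbasis b' -> s = cone b -> t = cone b' ->
  exists j q,
    [/\ adj_repr s t (b \o lift j) (b j) (b' q),
        cone_le1 b = cone_le1 (ext (b \o lift j) (b j)) &
        cone_le1 b' = cone_le1 (ext (b \o lift j) (b' q))].
Proof.
move=> [_ _ Hne [F [HFs HFt HFd]]] Hb Hb' Es Et.
have d0 : (0 < d)%N.
  case: (posnP d) => // Hd; exfalso; apply: Hne.
  suff all_cone (c : 'I_d -> vec) : cone c = setT by rewrite Es Et !all_cone.
  rewrite predeqE => x; split => // _; exists (fun _ => 0); split => //.
  exact: rV_dim0_eq.
subst s t; have [j EF] := face_dim_facet d0 Hb HFs HFd; subst F.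
have [q [Hq1 Hq2 Hq3]] := facet_neighbour d0 Hb Hb' HFt.
have [Hp1 Hp2 Hp3] := Zbasis_ext_lift j Hb.
by exists j, q; split.
Qed.

End Adjacent.

Section PairwiseConvex.
Variables (R : realType) (d : nat).
Local Notation vec := 'rV[R]_d.

Definition sum_le2 (k : nat) (u : 'I_k -> vec) (w : vec) : Prop :=
  [\/ w = 0, exists i, w = u i | exists i j, w = u i + u j].

Lemma sum_le2_comb k (u : 'I_k -> vec) w : sum_le2 u w ->
  exists n : 'I_k -> R, [/\ forall i, 0 <= n i, \sum_i n i <= 2 & w = \sum_i n i *: u i].
Proof.
have sum_delta i0 : \sum_l (l == i0)%:R = 1 :> R.
  by rewrite (bigD1 i0) //= eqxx big1 ?addr0 // => l /negbTE ->.
have sum_delta_u i0 : \sum_l (l == i0)%:R *: u l = u i0.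
  by under eq_bigr => l _ do rewrite eq_sym; rewrite sum_scale_delta.
case=> [->|[i ->]|[i [j ->]]].
- exists (fun _ => 0); split => //; first by rewrite big1 ?ler0n.
  by rewrite big1 // => i _; rewrite scale0r.
- exists (fun l => (l == i)%:R); split; last by rewrite sum_delta_u.
    by move=> l; rewrite ler0n.
  by rewrite sum_delta ler1n.
- exists (fun l => (l == i)%:R + (l == j)%:R); split.
  + by move=> l; rewrite addr_ge0 ?ler0n.
  + by rewrite big_split /= !sum_delta.
  + by under eq_bigr => l _ do rewrite scalerDl; rewrite big_split /= !sum_delta_u.
Qed.

Lemma sum_le2_int_comb k (u : 'I_k -> vec) (n : 'I_k -> R) :
  (forall i, n i \is a Num.int) -> (forall i, 0 <= n i) -> \sum_i n i <= 2 ->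
  sum_le2 u (\sum_i n i *: u i).
Proof.
move=> Hint Hn Hs.
have [[i Hi]|Hno] := pselect (exists i, n i != 0); last first.
  constructor 1; apply: big1 => i _.
  have -> : n i = 0 by apply/eqP/negPn/negP => H; apply: Hno; exists i.
  by rewrite scale0r.
have Hi1 : 1 <= n i by apply: int_ge1; rewrite // lt0r Hi Hn.
rewrite (bigD1 i) //= in Hs; rewrite (bigD1 i) //=.
have [[j [Hji Hj]]|Hno2] := pselect (exists j, j != i /\ n j != 0).
  have Hj1 : 1 <= n j by apply: int_ge1; rewrite // lt0r Hj Hn.
  rewrite (bigD1 j) //= in Hs; rewrite (bigD1 j) //=.
  set rest := \sum_(l | _) n l in Hs.
  have Hrest0 : 0 <= rest by apply: sumr_ge0.
  have Hrest : rest = 0 by lra.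
  have Hz := psumr_eq0P (fun l _ => Hn l) Hrest.
  rewrite big1 => [|l Hl]; last by rewrite Hz // scale0r.
  have -> : n i = 1 by lra.
  have -> : n j = 1 by lra.
  by constructor 3; exists i, j; rewrite !scale1r addr0.
have Hz l : l != i -> n l = 0.
  by move=> Hl; apply/eqP/negPn/negP => H; apply: Hno2; exists l.
rewrite big1 => [|l /Hz ->]; last by rewrite scale0r.
rewrite big1 ?addr0 in Hs; last by move=> l /Hz.
have [m Hm] := intrP (Hint i).
have : m = 1 \/ m = 2.
  have h1 : (1 <= m)%R by rewrite -(ler1z R) -Hm.
  have h2 : (m <= 2)%R by rewrite -(ler_int R) -Hm.
  lia.
by rewrite Hm addr0 => -[] ->; [constructor 2; exists i | constructor 3; exists i, i];
  rewrite ?scale1r // scaler_nat mulr2n.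
Qed.

Section Pair.
Variables (k : nat) (u : 'I_k -> vec) (v v' : vec).
Hypotheses (Hb : Zbasis (ext u v)) (Hb' : Zbasis (ext u v')).

Lemma coord_ext_some i o : coord (ext u v) (u i) o = (o == Some i)%:R.
Proof. by rewrite -[u i]/(ext u v (Some i)) coord_basis. Qed.

Lemma coord_ext_other (n : 'I_k -> R) : v + v' = \sum_i n i *: u i ->
  coord (ext u v) v' =1 fun o => if o is Some i then n i else -1.
Proof.
move=> Hn; apply: coord_unique => //.
by rewrite sum_option /= -Hn scaleN1r addKr.
Qed.

(* Compare the [v]-coordinates of the two points: the segment stays in the
   simplex whose apex carries the larger weight. *)
Lemma cone_le1_ext_segment (n : 'I_k -> R) x y t :
  (forall i, 0 <= n i) -> \sum_i n i <= 2 -> v + v' = \sum_i n i *: u i ->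
  cone_le1 (ext u v) x -> cone_le1 (ext u v') y -> 0 <= t -> t <= 1 ->
  t * coord (ext u v') y None <= (1 - t) * coord (ext u v) x None ->
  cone_le1 (ext u v) ((1 - t) *: x + t *: y).
Proof.
move=> Hn HN Hvv Hx Hy t0 t1 Hz.
set e := ext u v in Hx Hz *; set e' := ext u v' in Hy Hz *.
have Hcv' := coord_ext_other Hvv.
set b0 := coord e' y None in Hz *.
have Hcy o : coord e y o = if o is Some j then coord e' y (Some j) + n j * b0 else - b0.
  rewrite {1}(coordE Hb' y) coord_sum // sum_option /= Hcv'.
  under eq_bigr => i _ do rewrite coord_ext_some.
  case: o => [j|]; last by rewrite big1 ?addr0 ?mulrN1 // => i _; rewrite mulr0.
  rewrite (bigD1 j) //= eqxx mulr1 big1 ?addr0 => [|i Hi]; first by rewrite addrC mulrC.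
  by case: eqP => [[E]|_]; [rewrite E eqxx in Hi | rewrite mulr0].
have [Hx1 Hx2] := (cone_le1P Hb x).1 Hx.
have [Hy1 Hy2] := (cone_le1P Hb' y).1 Hy.
apply/(cone_le1P Hb); split.
  move=> [j|]; rewrite coordD // !coordZ // Hcy; last by rewrite mulrN subr_ge0.
  by rewrite addr_ge0 ?mulr_ge0 ?subr_ge0 ?addr_ge0 ?mulr_ge0 ?Hx1 ?Hy1 ?Hn.
under eq_bigr => o _ do rewrite coordD // !coordZ // Hcy.
rewrite sum_option /= big_split /= -!mulr_sumr big_split /= -mulr_suml.
rewrite sum_option in Hx2; rewrite sum_option in Hy2.
have HyN : 0 <= b0 := Hy1 None; have HxN := Hx1 None.
set a0 := coord e x None in Hx2 HxN Hz *.
set A := \sum_i coord e x (Some i) in Hx2 *.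
set B := \sum_i coord e' y (Some i) in Hy2 *.
rewrite -/e' -/b0 in Hy2.
set N := \sum_i n i in HN *.
have HA : 0 <= A by apply: sumr_ge0 => i _.
have HB : 0 <= B by apply: sumr_ge0 => i _.
have HP : b0 * N <= 2 * b0 by rewrite mulrC ler_wpM2r.
nra.
Qed.

End Pair.

Lemma cone_le1_ext_mix k (u : 'I_k -> vec) v v' (n : 'I_k -> R) x y t :
  Zbasis (ext u v) -> Zbasis (ext u v') ->
  (forall i, 0 <= n i) -> \sum_i n i <= 2 -> v + v' = \sum_i n i *: u i ->
  cone_le1 (ext u v) x -> cone_le1 (ext u v') y -> 0 <= t -> t <= 1 ->
  (cone_le1 (ext u v) `|` cone_le1 (ext u v')) ((1 - t) *: x + t *: y).
Proof.
move=> Hb Hb' Hn HN Hvv Hx Hy t0 t1.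
have [H|H] := lerP (t * coord (ext u v') y None) ((1 - t) * coord (ext u v) x None).
  by left; apply: (cone_le1_ext_segment Hb Hb' Hn HN Hvv).
right; have -> : (1 - t) *: x + t *: y = (1 - (1 - t)) *: y + (1 - t) *: x.
  by rewrite [RHS]addrC opprB addrCA subrr addr0.
apply: (cone_le1_ext_segment Hb' Hb Hn HN) => //; rewrite ?(addrC v') //; nra.
Qed.

Lemma cone_le1_ext_union_convex k (u : 'I_k -> vec) v v' (n : 'I_k -> R) :
  Zbasis (ext u v) -> Zbasis (ext u v') ->
  (forall i, 0 <= n i) -> \sum_i n i <= 2 -> v + v' = \sum_i n i *: u i ->
  convex (cone_le1 (ext u v) `|` cone_le1 (ext u v')).
Proof.
move=> Hb Hb' Hn HN Hvv x y t [Hx|Hx] [Hy|Hy] t0 t1.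
- by left; apply: cone_le1_convex.
- exact: (cone_le1_ext_mix Hb Hb' Hn HN Hvv).
- rewrite setUC; apply: (cone_le1_ext_mix Hb' Hb Hn HN) => //.
  by rewrite addrC.
- by right; apply: cone_le1_convex.
Qed.

(* The midpoint of [v] and [v'] lying in the simplex of [v] forces
   [v' = -v + sum_i n_i u_i] with integers [n_i >= 0] summing to at most 2. *)
Lemma sum_le2_of_midpoint k (u : 'I_k -> vec) v v' :
  Zbasis (ext u v) -> Zbasis (ext u v') -> v <> v' ->
  cone_le1 (ext u v) ((1 - 2^-1) *: v + 2^-1 *: v') -> sum_le2 u (v + v').
Proof.
move=> Hb Hb' Hne Hm.
set e := ext u v in Hb Hm; set c := coord e v'.
have Hv' : v' = c None *: v + \sum_i c (Some i) *: u i.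
  by rewrite {1}(coordE Hb v') sum_option.
have HcN : c None = 1 \/ c None = -1.
  apply: (intr_mul_eq1 (x := coord (ext u v') v None)).
  - by apply: coord_int; last exact: (Zbasis_lattice None Hb).
  - by apply: coord_int; last exact: (Zbasis_lattice None Hb').
  have : coord e v None = 1 by rewrite -[v]/(e None) coord_basis // eqxx.
  rewrite {1}(coordE Hb' v) coord_sum // sum_option /= big1 ?addr0 //.
  by move=> i _; rewrite coord_ext_some // mulr0.
have Hcm o : coord e ((1 - 2^-1) *: v + 2^-1 *: v') o = 2^-1 * (o == None)%:R + 2^-1 * c o.
  rewrite coordD // !coordZ // -[v]/(e None) coord_basis //.
  by congr (_ * _ + _); lra.
have [Hm1 Hm2] := (cone_le1P Hb _).1 Hm.
have Hci i : 0 <= c (Some i).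
  by have := Hm1 (Some i); rewrite Hcm /= mulr0 add0r pmulr_rge0 // invr_gt0 ltr0n.
move: Hm2; rewrite sum_option Hcm /=.
under eq_bigr => i _ do rewrite Hcm /= mulr0 add0r.
rewrite -mulr_sumr mulr1 => Hsum.
have Hs0 : 0 <= \sum_i c (Some i) by apply: sumr_ge0.
case: HcN => HcN; rewrite HcN in Hsum Hv'.
  have HS : \sum_i c (Some i) = 0 by lra.
  have Hz := psumr_eq0P (fun i _ => Hci i) HS.
  by case: Hne; rewrite Hv' scale1r big1 ?addr0 // => i _; rewrite Hz // scale0r.
rewrite Hv' scaleN1r addNKr.
apply: sum_le2_int_comb => // [i|]; last by lra.
by apply: coord_int; last exact: (Zbasis_lattice None Hb').
Qed.

Lemma sum_le2_of_union_convex k (u : 'I_k -> vec) v v' :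
  Zbasis (ext u v) -> Zbasis (ext u v') -> v <> v' ->
  convex (cone_le1 (ext u v) `|` cone_le1 (ext u v')) -> sum_le2 u (v + v').
Proof.
move=> Hb Hb' Hne Hc.
have h0 : (0 : R) <= 2^-1 by rewrite invr_ge0 ler0n.
have h1 : (2^-1 : R) <= 1 by rewrite invf_le1 ?ler1n // ltr0n.
have half : (1 - 2^-1 : R) = 2^-1 by lra.
have := Hc v v' 2^-1 (or_introl (cone_le1_basis Hb None)).
case/(_ (or_intror (cone_le1_basis Hb' None)) h0 h1) => Hm.
  exact: sum_le2_of_midpoint.
rewrite addrC; apply: sum_le2_of_midpoint => // [Evv|]; first by case: Hne.
by move: Hm; rewrite half addrC.
Qed.

Lemma pairwise_convexP (S : set (set vec)) :
  pairwise_convex S <->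
  (forall s t, adjacent S s t ->
     forall b b' : 'I_d -> vec, Zbasis b -> Zbasis b' ->
     s = cone b -> t = cone b' -> convex (cone_le1 b `|` cone_le1 b')).
Proof.
split=> [Hpc s t Hadj b b' Hb Hb' Es Et | Hconv s t Hadj k u v v' [Hz Hz' Es Et]].
  have [j [q [Hrep -> ->]]] := adjacent_repr Hadj Hb Hb' Es Et.
  have [n [Hn HN Hvv]] := sum_le2_comb (Hpc s t Hadj _ _ _ _ Hrep).
  by case: Hrep => Hz Hz' _ _; apply: (cone_le1_ext_union_convex Hz Hz' Hn HN Hvv).
have [h hb] := Zbasis_ord Hz.
have := Hconv s t Hadj _ _ (Zbasis_reindex hb Hz) (Zbasis_reindex hb Hz').
rewrite !cone_reindex // !cone_le1_reindex // => /(_ Es Et) Hc.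
apply: sum_le2_of_union_convex => // Evv.
by case: Hadj => _ _ Hne _; apply: Hne; rewrite Es Et Evv.
Qed.

End PairwiseConvex.

Section Height.
Variables (R : realType) (d : nat).
Local Notation vec := 'rV[R]_d.

Definition height (I : finType) (b : I -> vec) (x : vec) : R := \sum_i coord b x i.

Section Basis.
Variables (I : finType) (b : I -> vec).
Hypothesis Hb : Zbasis b.

Lemma height_sum (J : finType) (lam : J -> R) (y : J -> vec) :
  height b (\sum_j lam j *: y j) = \sum_j lam j * height b (y j).
Proof.
rewrite /height; under eq_bigr => i _ do rewrite coord_sum //.
by rewrite exchange_big /=; apply: eq_bigr => j _; rewrite mulr_sumr.
Qed.

Lemma heightD x y : height b (x + y) = height b x + height b y.
Proof. by rewrite /height -big_split; apply: eq_bigr => j _; rewrite coordD. Qed.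

Lemma heightZ a x : height b (a *: x) = a * height b x.
Proof. by rewrite /height mulr_sumr; apply: eq_bigr => j _; rewrite coordZ. Qed.

Lemma heightB x y : height b (x - y) = height b x - height b y.
Proof. by rewrite heightD // -scaleN1r heightZ mulN1r. Qed.

Lemma height_basis i : height b (b i) = 1.
Proof.
rewrite /height (bigD1 i) //= coord_basis // eqxx big1 ?addr0 // => j /negbTE Hj.
by rewrite coord_basis // Hj.
Qed.

Lemma cone_le1_height x : cone_le1 b x <-> cone b x /\ height b x <= 1.
Proof. by rewrite cone_le1P // coneP. Qed.

End Basis.

Lemma face_refl (C : set vec) : face C C.
Proof.
exists 0; split => [x _|]; first by rewrite dotvC dotv0.
by rewrite predeqE => x; split => [Cx | []//]; split => //=; rewrite dotvC dotv0.
Qed.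

Lemma height_common_face (I J : finType) (b : I -> vec) (b' : J -> vec) F x :
  Zbasis b -> Zbasis b' -> face F (cone b) -> face F (cone b') -> F x ->
  height b x = height b' x.
Proof.
move=> Hb Hb' HF HF' Fx.
have FC : F `<=` cone b' by case: HF' => w [_ ->] y [].
have Cx : cone b' x by apply: FC.
rewrite {1}(coordE Hb' x) height_sum //; apply: eq_bigr => j _.
have := (coneP Hb' x).1 Cx j; rewrite le0r => /orP [/eqP -> | Hj]; first by rewrite mul0r.
have [i [Ei _]] := face_basis_match Hb' Hb HF FC (face_support Hb' HF' Fx Hj).
by rewrite -Ei height_basis // mulr1.
Qed.

Lemma height_cone (I J : finType) (b : I -> vec) (c : J -> vec) x :
  Zbasis b -> Zbasis c -> cone b = cone c -> height b x = height c x.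
Proof.
move=> Hb Hc E.
have Fb : face (cone c) (cone b) by rewrite E; exact: face_refl.
have Hc1 j : height b (c j) = 1.
  by rewrite (height_common_face Hb Hc Fb (face_refl _) (cone_basis c j)) height_basis.
rewrite [in LHS](coordE Hc x) height_sum //.
by under eq_bigr => j _ do rewrite Hc1 mulr1.
Qed.

Lemma height_fan (S : set (set vec)) (C C' : set vec) (I J : finType)
    (b : I -> vec) (b' : J -> vec) x :
  fan S -> S C -> S C' -> Zbasis b -> Zbasis b' -> C = cone b -> C' = cone b' ->
  C x -> C' x -> height b x = height b' x.
Proof.
move=> [_ _ Hint] HC HC' Hb Hb' EC EC' Hx Hx'.
have [HF HF'] := Hint C C' HC HC'; rewrite {2}EC in HF; rewrite {2}EC' in HF'.
exact: height_common_face Hb Hb' HF HF' (conj Hx Hx').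
Qed.

Lemma cone_le1_fan (S : set (set vec)) (C C' : set vec) (I J : finType)
    (b : I -> vec) (b' : J -> vec) x :
  fan S -> S C -> S C' -> Zbasis b -> Zbasis b' -> C = cone b -> C' = cone b' ->
  C x -> cone_le1 b' x -> cone_le1 b x.
Proof.
move=> HS HC HC' Hb Hb' EC EC' Hx /(cone_le1_height Hb') [Hx' Hx1].
apply/(cone_le1_height Hb); split; first by rewrite -EC.
by rewrite (height_fan HS HC HC' Hb Hb' EC EC') ?EC'.
Qed.

Lemma PSigma_cone_le1 (S : set (set vec)) s (I : finType) (b : I -> vec) x :
  top_cones S s -> Zbasis b -> s = cone b -> cone_le1 b x -> PSigma S x.
Proof.
move=> Hs Hb Es Hx; have [h hb] := Zbasis_ord Hb.
exists s; split => //; exists (b \o h); split.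
- exact: Zbasis_reindex.
- by rewrite cone_reindex.
- by rewrite cone_le1_reindex.
Qed.

Lemma pairwise_convex_positive (S : set (set vec)) :
  pairwise_convex S -> pairwise_positive S.
Proof.
move=> Hpc s t Hadj k u v v' Hrep.
have [n [Hn _ ->]] := sum_le2_comb (Hpc s t Hadj k u v v' Hrep).
by exists n.
Qed.

Lemma cone_ext_some k (u : 'I_k -> vec) v x : cone u x -> cone (ext u v) x.
Proof.
case=> lam [Hl ->]; exists (fun o => if o is Some i then lam i else 0).
by split; [case | rewrite sum_option scale0r add0r].
Qed.

(* When [v + v'] lies in [cone u], the midpoint of [v] and [v'] lies in both
   cones, so convexity of [P(Sigma)] puts it in the simplex of [v]. *)
Lemma pairwise_convex_of_positive (S : set (set vec)) : fan S ->
  pairwise_positive S -> convex (PSigma S) -> pairwise_convex S.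
Proof.
move=> HS Hpos Hconv s t Hadj k u v v' Hrep.
have [Hb Hb' Es Et] := Hrep; have [Hs Ht Hne _] := Hadj.
have Hvv : v <> v' by move=> E; apply: Hne; rewrite Es Et E.
have HvP : PSigma S v.
  exact: PSigma_cone_le1 Hs Hb Es (cone_le1_basis Hb None).
have Hv'P : PSigma S v'.
  exact: PSigma_cone_le1 Ht Hb' Et (cone_le1_basis Hb' None).
have h0 : (0 : R) <= 2^-1 by rewrite invr_ge0 ler0n.
have h1 : (2^-1 : R) <= 1 by rewrite invf_le1 ?ler1n // ltr0n.
have [s'' [[Hs'' _] [b'' [Hb'' Es'' Hm]]]] := Hconv v v' 2^-1 HvP Hv'P h0 h1.
apply: sum_le2_of_midpoint => //.
apply: (cone_le1_fan HS Hs.1 Hs'' Hb Hb'' Es Es'') Hm.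
rewrite Es; apply: cone_ext_some.
have -> : (1 - 2^-1 : R) = 2^-1 by lra.
rewrite -scalerDr; have [lam [Hl ->]] := Hpos s t Hadj k u v v' Hrep.
exists (fun i => 2^-1 * lam i); split; first by move=> i; rewrite mulr_ge0.
by rewrite scaler_sumr; apply: eq_bigr => i _; rewrite scalerA.
Qed.

End Height.

Section Completeness.
Variables (R : realType) (d : nat).
Local Notation vec := 'rV[R]_d.

Lemma lin_indep_extend (r : nat) (y : 'I_r -> vec) (w p : vec) :
  lin_indep y -> (forall l, dotv w (y l) = 0) -> dotv w p != 0 ->
  lin_indep (fun l : 'I_r.+1 => if unlift ord_max l is Some l' then y l' else p).
Proof.
move=> Hy Hw Hp c; rewrite (bigD1_ord ord_max) //= unlift_none => Hc.
have {}Hc : c ord_max *: p + \sum_(l < r) c (lift ord_max l) *: y l = 0.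
  by rewrite -[RHS]Hc; congr (_ + _); apply: eq_bigr => l _; rewrite liftK.
have Hm : c ord_max = 0.
  have := congr1 (dotv w) Hc; rewrite dotvD dotvZ dotv_sum dotv0.
  rewrite big1 ?addr0 => [/eqP|l _]; last by rewrite Hw mulr0.
  by rewrite mulf_eq0 (negbTE Hp) orbF => /eqP.
rewrite Hm scale0r add0r in Hc.
by move=> l; case: (unliftP ord_max l) => [l' ->|->] //; exact: Hy Hc l'.
Qed.

(* A cone of maximal dimension among those containing [z] is maximal: a larger
   cone would have it as a proper face, hence contain a point off its span. *)
Lemma maximal_cone_cover (S : set (set vec)) : fan S -> complete_fan S ->
  forall z, exists C, maximal_cone S C /\ C z.
Proof.
move=> [_ _ Hint] Hcomp z.
pose P r := `[< exists C, [/\ S C, C z & dim_ge C r] >].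
have P0 : exists r, P r.
  have [C [HC Cz]] := Hcomp z; exists 0%N; apply/asboolP; exists C; split => //.
  by exists (fun i : 'I_0 => 0); split => [[]|c _ []].
have Pd r : P r -> (r <= d)%N.
  by move=> /asboolP [C [_ _ [y [_ /lin_indep_le_dim]]]].
case: (ex_maxnP P0 Pd) => r /asboolP [C [HC Cz [y [HyC Hy]]]] Hmax.
exists C; split => //; split => // C' HC' Hsub; apply: contrapT => Hne.
have [_ [w [Hw EC]]] := Hint C C' HC HC'; rewrite (setIidl Hsub) in EC.
have [p [C'p Hp]] : exists p, C' p /\ dotv w p != 0.
  apply: contrapT => Hno; apply: Hne; rewrite predeqE => x; split; last exact: Hsub.
  move=> C'x; rewrite EC; split => //; apply/eqP; apply: contrapT => Hx0.
  by apply: Hno; exists x; split => //; apply/negP.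
have : P r.+1.
  apply/asboolP; exists C'; split => //; first exact: Hsub.
  exists (fun l : 'I_r.+1 => if unlift ord_max l is Some l' then y l' else p).
  split => [l|]; first by case: (unliftP ord_max l) => [l' _|_] //; apply/Hsub/HyC.
  apply: lin_indep_extend Hy _ Hp => l.
  by have := HyC l; rewrite EC; case.
by move/Hmax; rewrite ltnn.
Qed.

End Completeness.

Section Wall.
Variables (R : realType) (d : nat).
Local Notation vec := 'rV[R]_d.

(* With [v + v' = sum_i n_i u_i], the two heights differ on [x] by
   [(2 - sum_i n_i)] times the nonpositive [v]-coordinate of [x]. *)
Lemma height_ext_le k (u : 'I_k -> vec) v v' (n : 'I_k -> R) x :
  Zbasis (ext u v) -> Zbasis (ext u v') -> \sum_i n i <= 2 ->
  v + v' = \sum_i n i *: u i -> coord (ext u v) x None <= 0 ->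
  height (ext u v) x <= height (ext u v') x.
Proof.
move=> Hb Hb' HN Hvv Hx.
have Hu i : height (ext u v') (u i) = 1 by exact: (height_basis Hb' (Some i)).
have Hv : height (ext u v') v = \sum_i n i - 1.
  have -> : v = \sum_i n i *: u i - v' by rewrite -Hvv addrK.
  rewrite heightB // height_sum // (height_basis Hb' None).
  by under eq_bigr => i _ do rewrite Hu mulr1.
rewrite {2}(coordE Hb x) height_sum // sum_option /= Hv.
under eq_bigr => i _ do rewrite Hu mulr1.
rewrite /height sum_option; nra.
Qed.

Lemma adjacent_facet (S : set (set vec)) (C C' : set vec) (b b' : 'I_d -> vec) j :
  S C -> S C' -> C <> C' -> Zbasis b -> Zbasis b' -> C = cone b -> C' = cone b' ->
  face (facet b j) (cone b') -> adjacent S C C'.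
Proof.
move=> HC HC' Hne Hb Hb' EC EC' HF; split => //.
- by split => //; rewrite EC; apply: cone_dim_basis.
- by split => //; rewrite EC'; apply: cone_dim_basis.
- exists (facet b j); split; rewrite ?EC ?EC' //; [exact: facet_face | exact: facet_dim].
Qed.

(* Local convexity of the height function across a wall. *)
Lemma pairwise_convex_wall (S : set (set vec)) (C C' : set vec) (b b' : 'I_d -> vec) j :
  fan S -> pairwise_convex S -> S C -> S C' -> Zbasis b -> Zbasis b' ->
  C = cone b -> C' = cone b' -> C <> C' -> (0 < d)%N ->
  C `&` C' = facet b j ->
  forall x, coord b x j <= 0 -> height b x <= height b' x.
Proof.
move=> [_ _ Hint] Hpc HC HC' Hb Hb' EC EC' Hne d0 EF x Hx.
have HF : face (facet b j) (cone b') by rewrite -EF -EC'; case: (Hint C C' HC HC').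
have Hadj := adjacent_facet HC HC' Hne Hb Hb' EC EC' HF.
have [q [Hz' Ec' _]] := facet_neighbour d0 Hb Hb' HF.
have [Hz Ec _] := Zbasis_ext_lift j Hb.
have Hrep : adj_repr C C' (b \o lift j) (b j) (b' q) by split; rewrite ?EC ?EC'.
have [n [_ HN Hvv]] := sum_le2_comb (Hpc C C' Hadj _ _ _ _ Hrep).
rewrite (height_cone x Hb Hz Ec) (height_cone x Hb' Hz' Ec').
apply: (height_ext_le Hz Hz' HN Hvv).
by rewrite ext_lift coord_reindex //; exact: lift_option_bij.
Qed.

(* A point of [C `&` C'] with a single vanishing coordinate pins the common
   face down to a facet, since [C `&` C'] is a proper face of the maximal [C]. *)
Lemma maximal_cap_facet (S : set (set vec)) (C C' : set vec) (b : 'I_d -> vec) x j :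
  fan S -> maximal_cone S C -> maximal_cone S C' -> C <> C' -> Zbasis b -> C = cone b ->
  C x -> C' x -> (forall k, coord b x k = 0 -> k = j) -> C `&` C' = facet b j.
Proof.
move=> [_ _ Hint] [HC Cmax] [HC' _] Hne Hb EC Cx C'x Hx.
have [HF _] := Hint C C' HC HC'; rewrite {2}EC in HF.
have [w [Hw EF]] := face_coneP Hb HF.
have Hxw k : 0 < dotv w (b k) -> k = j.
  move=> Hk; apply: Hx; have : (C `&` C') x by split.
  by rewrite EF => -[_]; apply.
have Hwj : 0 < dotv w (b j).
  apply: contrapT => Hj; apply: Hne; symmetry; apply: Cmax HC' _ => y Cy.
  suff : (C `&` C') y by case.
  rewrite EF; split; first by rewrite -EC.
  by move=> k Hk; case: Hj; rewrite -(Hxw k Hk).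
rewrite EF predeqE => y; split=> -[Cy Hy]; split => //; first exact: Hy.
by move=> k /Hxw ->.
Qed.

End Wall.

Section Near0.
Variable R : realType.

Definition near0 (P : R -> Prop) : Prop :=
  exists2 e, 0 < e & forall eps, 0 < eps -> eps < e -> P eps.

Lemma near0_ex P : near0 P -> exists2 eps, 0 < eps & P eps.
Proof. by case=> e e0 He; exists (e / 2); [|apply: He]; lra. Qed.

Lemma near0_mono (P Q : R -> Prop) : (forall eps, P eps -> Q eps) -> near0 P -> near0 Q.
Proof. by move=> PQ [e e0 He]; exists e => // eps ? ?; apply/PQ/He. Qed.

Lemma near0_and P Q : near0 P -> near0 Q -> near0 (fun eps => P eps /\ Q eps).
Proof.
move=> [e1 e10 H1] [e2 e20 H2]; exists (Order.min e1 e2) => [|eps eps0].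
  by rewrite lt_min e10.
by rewrite lt_min => /andP [? ?]; split; [apply: H1 | apply: H2].
Qed.

Lemma near0_all (I : finType) (P : I -> R -> Prop) :
  (forall i, near0 (P i)) -> near0 (fun eps => forall i, P i eps).
Proof.
move=> HP; suff : near0 (fun eps => forall i, i \in enum I -> P i eps).
  by apply: near0_mono => eps H i; apply/H; rewrite mem_enum.
elim: (enum I) => [|i s IH]; first by exists 1.
apply: near0_mono (near0_and (HP i) IH) => eps [Hi Hs] k.
by rewrite in_cons => /orP [/eqP -> | /Hs].
Qed.

Lemma near0_lt c : 0 < c -> near0 (fun eps => eps < c).
Proof. by move=> c0; exists c. Qed.

Lemma near0_affine_gt0 g D : 0 < g -> near0 (fun eps => 0 < g + eps * D).
Proof.
move=> g0; have [D0|D0] := lerP 0 D.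
  by exists 1 => // eps eps0 _; rewrite ltr_wpDr // mulr_ge0 // ltW.
exists (g / - D) => [|eps eps0]; first by rewrite divr_gt0 // oppr_gt0.
by rewrite ltr_pdivlMr ?oppr_gt0 // mulrN => ?; lra.
Qed.

Lemma exists_notin (l : seq R) e0 : 0 < e0 -> exists eps, [/\ 0 < eps, eps < e0 & eps \notin l].
Proof.
elim: l e0 => [|a l IH] e0 e00; first by exists (e0 / 2); split; rewrite ?in_nil //; lra.
have [[a0 ae0]|Ha] := pselect (0 < a /\ a < e0).
  have [e [e0' ea He]] := IH a a0; exists e; split => //; first exact: lt_trans ea ae0.
  by rewrite in_cons negb_or He andbT (lt_eqF ea).
have [e [e0' ee0 He]] := IH e0 e00; exists e; split => //.
by rewrite in_cons negb_or He andbT; apply/eqP => Eea; apply: Ha; rewrite -Eea.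
Qed.

End Near0.

Section Avoid.
Variables (R : realType) (d : nat).
Local Notation vec := 'rV[R]_d.

Lemma dotv_self_neq0 (w : vec) : w != 0 -> dotv w w != 0.
Proof.
apply: contraNneq => H; apply/eqP/rowP => k; rewrite mxE.
have Hsq l : 0 <= w 0 l * w 0 l by rewrite -expr2 sqr_ge0.
have /eqP := psumr_eq0P (fun l _ => Hsq l) H (i := k) isT.
by rewrite mulf_eq0 orbb => /eqP.
Qed.

(* On the line [x0 + eps e], each functional [dotv w] not vanishing
   identically on it has at most one zero. *)
Lemma line_avoid (I : finType) (P : pred I) (w : I -> vec) (x0 e : vec) e0 : 0 < e0 ->
  (forall i, P i -> dotv (w i) x0 != 0 \/ dotv (w i) e != 0) ->
  exists eps, [/\ 0 < eps, eps < e0 & forall i, P i -> dotv (w i) (x0 + eps *: e) != 0].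
Proof.
move=> e00 Hw.
have [eps [eps0 epse0 Heps]] :=
  exists_notin [seq - dotv (w i) x0 / dotv (w i) e | i <- enum I] e00.
exists eps; split => // i Pi; rewrite dotvD dotvZ.
have [He|He] := eqVneq (dotv (w i) e) 0.
  by rewrite He mulr0 addr0; case: (Hw i Pi) => //; rewrite He eqxx.
apply: contraNneq Heps => H; apply/mapP; exists i; first by rewrite mem_enum.
have -> : - dotv (w i) x0 = eps * dotv (w i) e.
  by apply/eqP; rewrite eq_sym -addr_eq0 addrC H.
by rewrite mulfK.
Qed.

Lemma hyperplanes_avoid (I : finType) (P : pred I) (w : I -> vec) :
  (forall i, P i -> w i != 0) -> exists e, forall i, P i -> dotv (w i) e != 0.
Proof.
move=> Hw; suff [e He] : exists e, forall i, i \in enum P -> dotv (w i) e != 0.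
  by exists e => i Pi; apply: He; rewrite mem_enum.
have : all P (enum P) by apply/allP => i; rewrite mem_enum.
elim: (enum P) => [|a s IH] /=; first by exists 0.
case/andP=> Pa /IH [e He].
have Hline i : i \in a :: s -> dotv (w i) e != 0 \/ dotv (w i) (w a) != 0.
  rewrite in_cons => /orP [/eqP -> | /He]; last by left.
  by right; apply/dotv_self_neq0/Hw.
have [eps [_ _ Heps]] := line_avoid (P := mem (a :: s)) ltr01 Hline.
by exists (e + eps *: w a).
Qed.

Lemma near0_avoid (I : finType) (P : pred I) (w : I -> vec) (x0 e : vec) (Q : R -> Prop) :
  (forall i, P i -> dotv (w i) e != 0) -> near0 Q ->
  exists2 eps, Q eps & forall i, P i -> dotv (w i) (x0 + eps *: e) != 0.
Proof.
move=> Hw [e0 e00 HQ].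
have [eps [eps0 epse0 Heps]] := line_avoid (x0 := x0) e00 (fun i Pi => or_intror (Hw i Pi)).
by exists eps => //; apply: HQ.
Qed.

End Avoid.

Section Generic.
Variables (R : realType) (d m : nat) (B : 'I_m -> 'I_d -> 'rV[R]_d).
Local Notation vec := 'rV[R]_d.
Hypothesis HB : forall i, Zbasis (B i).

Definition seg (p q : vec) (t : R) : vec := p + t *: (q - p).

Lemma seg0 p q : seg p q 0 = p.
Proof. by rewrite /seg scale0r addr0. Qed.

Lemma seg1 p q : seg p q 1 = q.
Proof. by rewrite /seg scale1r addrC subrK. Qed.

Lemma coord_seg i p q t j :
  coord (B i) (seg p q t) j = coord (B i) p j + t * (coord (B i) q j - coord (B i) p j).
Proof. by rewrite coordD // coordZ // coordB. Qed.

Definition generic (p q : vec) : Prop :=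
  forall i t, 0 <= t -> t <= 1 -> forall j1 j2,
  coord (B i) (seg p q t) j1 = 0 -> coord (B i) (seg p q t) j2 = 0 -> j1 = j2.

Lemma coord_duals :
  exists w : 'I_m -> 'I_d -> vec, forall i j y, dotv (w i j) y = coord (B i) y j.
Proof.
apply: (choice (fun i wi => forall j y, dotv (wi j) y = coord (B i) y j)) => i.
exact: choice (fun j w => forall y, dotv w y = coord (B i) y j) (fun j => coord_dual j (HB i)).
Qed.

Lemma generic_start i0 : exists p, cone (B i0) p /\ forall i j, coord (B i) p j != 0.
Proof.
have [w Hw] := coord_duals.
have w0 (a : 'I_m * 'I_d) : predT a -> w a.1 a.2 != 0.
  move=> _; apply/eqP => E.
  have := Hw a.1 a.2 (B a.1 a.2); rewrite E dotvC dotv0 coord_basis // eqxx.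
  by move/eqP; rewrite eq_sym oner_eq0.
have [e He] := hyperplanes_avoid w0.
pose p0 := \sum_j B i0 j.
have Hp0 j : coord (B i0) p0 j = 1.
  by apply: coord_unique => //; under eq_bigr => k _ do rewrite scale1r.
have Hpos := near0_all (fun j => near0_affine_gt0 (coord (B i0) e j) (@ltr01 R)).
have [eps Heps Hav] := near0_avoid p0 He Hpos.
exists (p0 + eps *: e); split.
  by apply/(coneP (HB i0)) => j; rewrite coordD // coordZ // Hp0 ltW.
by move=> i j; rewrite -Hw; exact: Hav (i, j) isT.
Qed.

Lemma generic_end p : (forall i j, coord (B i) p j != 0) ->
  exists e, forall q0 (P : R -> Prop), near0 P ->
  exists2 eps, P eps & generic p (q0 + eps *: e).
Proof.
move=> Hp; have [w Hw] := coord_duals.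
pose N (a : 'I_m * 'I_d * 'I_d) : vec :=
  coord (B a.1.1) p a.2 *: w a.1.1 a.1.2 - coord (B a.1.1) p a.1.2 *: w a.1.1 a.2.
have HN a y : dotv (N a) y = coord (B a.1.1) p a.2 * coord (B a.1.1) y a.1.2
                             - coord (B a.1.1) p a.1.2 * coord (B a.1.1) y a.2.
  by rewrite dotvC dotvD -scaleNr !dotvZ !(dotvC y) !Hw mulNr.
have N0 (a : 'I_m * 'I_d * 'I_d) : a.1.2 != a.2 -> N a != 0.
  move=> Ha; apply: contraNneq (Hp a.1.1 a.2) => E.
  have := HN a (B a.1.1 a.1.2); rewrite E dotvC dotv0 !coord_basis //.
  by rewrite eqxx eq_sym (negbTE Ha) mulr0 mulr1 subr0 => <-.
have [e He] := hyperplanes_avoid N0.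
exists e => q0 P HP; have [eps Peps Hav] := near0_avoid q0 He HP.
exists eps => // i t _ _ j1 j2 Hz1 Hz2; apply/eqP/contraT => Hj.
have := Hav (i, j1, j2) Hj; rewrite HN /=.
move: Hz1 Hz2; rewrite !coord_seg.
set c1 := coord _ p j1; set c2 := coord _ p j2.
set q1 := coord _ _ j1; set q2 := coord _ _ j2 => Hz1 Hz2 Hq.
have : t * (c2 * q1 - c1 * q2) = c2 * (c1 + t * (q1 - c1)) - c1 * (c2 + t * (q2 - c2)).
  by ring.
rewrite Hz1 Hz2 !mulr0 subrr => /eqP; rewrite mulf_eq0 (negbTE Hq) orbF => /eqP t0.
by move: Hz1 (Hp i j1); rewrite -/c1 t0 mul0r addr0 => ->; rewrite eqxx.
Qed.

End Generic.

Section Convexity.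
Variables (R : realType) (d m : nat) (S : set (set 'rV[R]_d)).
Variable B : 'I_m -> 'I_d -> 'rV[R]_d.
Local Notation vec := 'rV[R]_d.
Hypotheses (HS : fan S) (Hcomp : complete_fan S) (Hpc : pairwise_convex S).
Hypothesis d0 : (0 < d)%N.
Hypothesis HB : forall i, Zbasis (B i).
Hypothesis HM : forall C, maximal_cone S C <-> exists i, C = cone (B i).

Lemma maximal_B i : maximal_cone S (cone (B i)).
Proof. by apply/HM; exists i. Qed.

Lemma maximal_B_cover z : exists i, cone (B i) z.
Proof. by have [C [/HM [i ->] Cz]] := maximal_cone_cover HS Hcomp z; exists i. Qed.

Section Sweep.
Variables (p q : vec) (i0 : 'I_m).
Hypotheses (Hp : cone (B i0) p) (Hgen : generic B p q).

(* The invariant of the sweep along the segment [p, q]. *)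
Definition dominates i t := [/\ 0 <= t, t <= 1, cone (B i) (seg p q t) &
  forall s, t <= s -> height (B i0) (seg p q s) <= height (B i) (seg p q s)].

Let reached := [set t | exists i, dominates i t].

Lemma reached_sup : has_sup reached.
Proof.
split; last by exists 1 => t [i [_ ? _ _]].
by exists 0, i0; split => //; rewrite seg0.
Qed.

Lemma reached_le_sup t : reached t -> t <= sup reached.
Proof. exact: (sup_upper_bound reached_sup). Qed.

Lemma sup_reached_le1 : sup reached <= 1.
Proof. by apply: (ge_sup reached_sup.1) => t [i []]. Qed.

Lemma dominates_limit i t0 :
  (forall e, 0 < e -> exists2 t, dominates i t & t0 - e < t <= t0) -> t0 <= 1 ->
  dominates i t0.
Proof.
move=> Hclose t01.
have [t1 [t10 _ _ Hdom1] /andP [_ t1t0]] := Hclose 1 ltr01.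
split => //; first exact: le_trans t1t0.
  apply/(coneP (HB i)) => j; rewrite leNgt; apply/negP => Hneg.
  have Hg : 0 < - coord (B i) (seg p q t0) j by rewrite oppr_gt0.
  have [e e0 He] := near0_affine_gt0 (coord (B i) q j - coord (B i) p j) Hg.
  have [t [_ _ Ct _] /andP [te tt0]] := Hclose e e0.
  have := (coneP (HB i) _).1 Ct j.
  have [Et|tne] := eqVneq t t0; first by rewrite Et leNgt Hneg.
  have H1 : 0 < t0 - t by rewrite subr_gt0 lt_neqAle tne tt0.
  have H2 : t0 - t < e by lra.
  by have := He _ H1 H2; rewrite !(coord_seg HB); nra.
move=> s Hs; apply: Hdom1; exact: le_trans t1t0 Hs.
Qed.

Lemma sweep_sup : exists i, dominates i (sup reached).
Proof.
apply: contrapT => Hno.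
have Hfar i : near0 (fun e => forall t, dominates i t -> t <= sup reached - e).
  have [e e0 He] : exists2 e, 0 < e & forall t, dominates i t -> t <= sup reached - e.
    apply: contrapT => Hi; apply: Hno; exists i.
    apply: dominates_limit sup_reached_le1 => e e0; apply: contrapT => Hn.
    apply: Hi; exists e => // t Dt; rewrite leNgt; apply/negP => Hlt.
    by apply: Hn; exists t; rewrite // Hlt reached_le_sup //; exists i.
  by exists e => // e' _ e'e t /He; lra.
have [e e0 He] := near0_ex (near0_all Hfar).
have [t [i Dt] Hlt] := sup_adherent e0 reached_sup.
by have := He i t Dt; lra.
Qed.

Lemma exists_coord_lt0 (b : 'I_d -> vec) x : Zbasis b -> ~ cone b x ->
  exists j, coord b x j < 0.
Proof.
move=> Hb Cx; apply: contrapT => Hno; apply: Cx; apply/(coneP Hb) => j.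
by rewrite leNgt; apply/negP => Hj; apply: Hno; exists j.
Qed.

(* Just after time [t], the segment stays in the cones containing its point at
   time [t]; if it leaves [cone (B i)], it crosses a facet, and the wall
   inequality lets the cone on the other side take over. *)
Lemma sweep_step i t : dominates i t -> t < 1 -> exists2 t', t < t' & reached t'.
Proof.
move=> [t0 t1 Cx Hdom] tlt1; set xs := seg p q t.
have Nleave : near0 (fun e => forall k, cone (B k) (seg p q (t + e)) -> cone (B k) xs).
  apply: near0_all => k; have [Ck|Ck] := pselect (cone (B k) xs); first by exists 1.
  have [j Hj] := exists_coord_lt0 (HB k) Ck; rewrite -oppr_gt0 in Hj.
  apply: near0_mono (near0_affine_gt0 (coord (B k) p j - coord (B k) q j) Hj).
  move=> e He /(coneP (HB k)) /(_ j); move: He; rewrite !(coord_seg HB); nra.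
have Nstay : near0 (fun e => forall j, 0 < coord (B i) xs j ->
                                       0 < coord (B i) (seg p q (t + e)) j).
  apply: near0_all => j; have [Hj|Hj] := lerP (coord (B i) xs j) 0.
    by exists 1 => // e _ _ Hj'; move: (lt_le_trans Hj' Hj); rewrite ltxx.
  apply: near0_mono (near0_affine_gt0 (coord (B i) q j - coord (B i) p j) Hj).
  by move=> e He _; move: He; rewrite !(coord_seg HB); nra.
have t1' : 0 < 1 - t by lra.
have [e e0 [[Hleave Hstay] et]] :=
  near0_ex (near0_and (near0_and Nleave Nstay) (near0_lt t1')).
set z := seg p q (t + e); have [k Ckz] := maximal_B_cover z.
exists (t + e); first lra.
have [Ciz|Ciz] := pselect (cone (B i) z).
  by exists i; split => //; [lra | lra | move=> s Hs; apply: Hdom; lra].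
have [j0 Hj0] := exists_coord_lt0 (HB i) Ciz.
have Hxj0 : coord (B i) xs j0 = 0.
  apply/eqP; rewrite eq_le ((coneP (HB i) _).1 Cx j0) andbT leNgt; apply/negP.
  by move=> /Hstay; rewrite -/z; lra.
have Hne : cone (B i) <> cone (B k) by move=> E; apply: Ciz; rewrite E.
have EF : cone (B i) `&` cone (B k) = facet (B i) j0.
  apply: (maximal_cap_facet HS (maximal_B i) (maximal_B k) Hne (HB i) erefl Cx).
    exact: Hleave.
  by move=> j Hj; apply: Hgen t0 t1 j j0 Hj Hxj0.
have Hwall := pairwise_convex_wall HS Hpc (maximal_B i).1 (maximal_B k).1 (HB i) (HB k)
  erefl erefl Hne d0 EF.
exists k; split => //; [lra | lra | move=> s Hs].
apply: le_trans (Hdom s _) (Hwall _ _); first lra.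
move: Hj0 Hxj0; rewrite /z /xs !(coord_seg HB) => Hj0 Hxj0.
have HD : coord (B i) q j0 - coord (B i) p j0 < 0 by nra.
nra.
Qed.

Lemma sweep : exists i, cone (B i) q /\ height (B i0) q <= height (B i) q.
Proof.
have [i Di] := sweep_sup.
have ts1 : sup reached = 1.
  apply/eqP; rewrite eq_le sup_reached_le1 /= leNgt; apply/negP => lt1.
  have [t' tt' Rt'] := sweep_step Di lt1.
  by have := reached_le_sup Rt'; lra.
rewrite ts1 in Di; case: Di => _ _ Cq Hdom.
by exists i; rewrite -(seg1 p q); split => //; apply: Hdom.
Qed.

End Sweep.

(* Sweep from a generic point of [cone (B i0)] to a generic point [q] near [x]
   inside [C]; the sweep shows [height (B i0) q <= height b q], which passes
   to the limit [q -> x]. *)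
Lemma height_maximal_le i0 (C : set vec) (b : 'I_d -> vec) x :
  S C -> Zbasis b -> C = cone b -> C x -> height (B i0) x <= height b x.
Proof.
move=> SC Hb EC Cx; rewrite EC in Cx.
have [p [Hp Hpnz]] := generic_start HB i0.
have [e He] := generic_end HB Hpnz.
rewrite leNgt; apply/negP => Hlt.
pose L y := height (B i0) y - height b y.
have LDZ y a z : L (y + a *: z) = L y + a * L z.
  by rewrite /L !heightD // !heightZ //; ring.
have Lx : 0 < L x by rewrite subr_gt0.
pose ps := \sum_j b j.
have Hps j : coord b ps j = 1.
  by apply: coord_unique => //; under eq_bigr => k _ do rewrite scale1r.
have [k k0 Hk] := near0_ex (near0_affine_gt0 (L ps) Lx).
pose q0 := x + k *: ps.
have Lq0 : 0 < L q0 by rewrite LDZ.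
have Nq : near0 (fun eps => cone b (q0 + eps *: e) /\ 0 < L (q0 + eps *: e)).
  apply: near0_and; last first.
    by apply: near0_mono (near0_affine_gt0 (L e) Lq0) => eps H; rewrite LDZ.
  apply: near0_mono (near0_all (fun j => near0_affine_gt0 (coord b e j) k0)) => eps Heps.
  apply/(coneP Hb) => j; rewrite !coordD // !coordZ // Hps mulr1.
  by have := (coneP Hb x).1 Cx j; have := Heps j; lra.
have [eps [Cq Lq] Hg] := He q0 _ Nq.
have [i [Ciq Hi]] := sweep Hp Hg.
have := height_fan HS (maximal_B i).1 SC (HB i) Hb erefl EC Ciq.
by rewrite EC => /(_ Cq); move: Lq; rewrite /L; lra.
Qed.

Lemma PSigma_convex : convex (PSigma S).
Proof.
move=> x y t [sx [[Sx _] [bx [Hbx Ex Hx]]]] [sy [[Sy _] [by_ [Hby Ey Hy]]]] t0 t1.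
have [i Ciz] := maximal_B_cover ((1 - t) *: x + t *: y).
have Hi : top_cones S (cone (B i)).
  by split; [exact: (maximal_B i).1 | exact: cone_dim_basis].
apply: (PSigma_cone_le1 Hi (HB i) erefl).
apply/(cone_le1_height (HB i)); split => //; rewrite heightD // !heightZ //.
have [Cx hx] := (cone_le1_height Hbx x).1 Hx.
have [Cy hy] := (cone_le1_height Hby y).1 Hy.
have := height_maximal_le i Sx Hbx Ex (eq_ind_r (@^~ x) Cx Ex).
have := height_maximal_le i Sy Hby Ey (eq_ind_r (@^~ y) Cy Ey).
nra.
Qed.

End Convexity.

Lemma maximal_cones_enum (R : realType) (d : nat) (S : set (set 'rV[R]_d)) :
  nonsingular_fan S -> finite_set S ->
  exists m (B : 'I_m -> 'I_d -> 'rV[R]_d),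
    (forall i, Zbasis (B i)) /\ (forall C, maximal_cone S C <-> exists i, C = cone (B i)).
Proof.
move=> [_ Hns] /finite_seqP [s Es].
pose ms := [seq C <- s | `[< maximal_cone S C >]].
have Hms C : maximal_cone S C <-> C \in ms.
  rewrite mem_filter; split => [HC | /andP [/asboolP //]].
  by rewrite asboolT //=; have := HC.1; rewrite Es.
have [Bc HBc] : exists Bc : set 'rV[R]_d -> 'I_d -> 'rV[R]_d,
    forall C, maximal_cone S C -> Zbasis (Bc C) /\ C = cone (Bc C).
  apply: (choice (fun C b => maximal_cone S C -> Zbasis b /\ C = cone b)) => C.
  have [/Hns [b [Hb Eb]]|nC] := pselect (maximal_cone S C); first by exists b.
  by exists (fun _ => 0) => /nC.
have Hnth (i : 'I_(size ms)) : maximal_cone S (nth set0 ms i) by apply/Hms/mem_nth.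
exists (size ms), (fun i => Bc (nth set0 ms i)); split => [i|C].
  exact: (HBc _ (Hnth i)).1.
split => [HC | [i ->]]; last by rewrite -(HBc _ (Hnth i)).2.
have Cms : C \in ms by apply/Hms.
exists (Ordinal (etrans (index_mem C ms) Cms)) => /=.
by rewrite nth_index // -(HBc C HC).2.
Qed.

Lemma convex_dim0 (R : realType) (d : nat) (A : set 'rV[R]_d) : d = 0%N -> convex A.
Proof.
by move=> d0 x y t Ax _ _ _; rewrite (rV_dim0_eq ((1 - t) *: x + t *: y) x d0).
Qed.

Theorem proposition5p7 (R : realType) (d : nat) (S : set (set 'rV[R]_d)) :
  nonsingular_fan S ->
  (pairwise_convex S <->
   (forall s t, adjacent S s t ->
      forall b b' : 'I_d -> 'rV[R]_d, Zbasis b -> Zbasis b' ->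
      s = cone b -> t = cone b' -> convex (cone_le1 b `|` cone_le1 b'))) /\
  (finite_set S -> complete_fan S ->
   (pairwise_convex S <-> (pairwise_positive S /\ convex (PSigma S)))).
Proof.
move=> HS; split; first exact: pairwise_convexP.
move=> Hfin Hcomp; split; last first.
  by case=> Hpos Hconv; apply: pairwise_convex_of_positive HS.1 Hpos Hconv.
move=> Hpc; split; first exact: pairwise_convex_positive.
have [d0|d0] := posnP d; first exact: convex_dim0.
have [m [B [HB HM]]] := maximal_cones_enum HS Hfin.
exact: PSigma_convex HS.1 Hcomp Hpc d0 HB HM.
Qed.
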